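(* Let $S=(P,L)$ be a finite $(2,t)$-generalized quadrangle and let $(R,\psi)$ be a faithful representation of $S$, with $\psi(x)=\langle r_x\rangle$ and $R_\psi=\{r_x:x\in P\}$. If $S$ contains a $3$-arc $T=\{a,b,c\}$ such that $r_ar_br_c\in R_\psi$, then $(t,|R|)=(2,2^4)$; moreover, $T$ is not complete.
   Context: A $(2,t)$-generalized quadrangle is a partial linear space in which every line has exactly $3$ points, every point lies on exactly $t+1$ lines, no point is collinear with all points, and for every point $x$ and line $\ell$ with $x\notin\ell$, $x$ is collinear with exactly one point of $\ell$. A $k$-arc is a set of $k$ pairwise non-collinear points; it is complete if it is not contained in a $(k+1)$-arc. A representation $(R,\psi)$ of $S$ is a group $R$ with a map $\psi$ assigning to each point $x$ a subgroup $\psi(x)=\langle r_x\rangle$ of order $2$, such that $R$ is generated by the $r_x$ and, for every line $\{x,y,z\}$, $\{1,r_x,r_y,r_z\}$ is a Klein four subgroup. It is faithful if $\psi$ is injective. *)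

From HB Require Import structures.
From mathcomp Require Import all_boot.
Set Implicit Arguments. Unset Strict Implicit. Unset Printing Implicit Defensive.
(** Point-line geometries: points form a finite type [P]; lines are given as
    a set [L] of subsets of [P] (each line is identified with its point set). *)

Section GQ.
Variable P : finType.
Variable L : {set {set P}}.

Definition collinear (x y : P) : bool :=
  (x != y) && [exists l in L, (x \in l) && (y \in l)].

Definition is_GQ2 (t : nat) : Prop :=
  [/\
      (forall l, l \in L -> #|l| = 3),
      (forall x : P, #|[set l in L | x \in l]| = t.+1),
      (forall l1 l2 x y, l1 \in L -> l2 \in L -> x != y ->
         x \in l1 -> y \in l1 -> x \in l2 -> y \in l2 -> l1 = l2),
      (forall x : P, exists y : P, y != x /\ ~~ collinear x y) &
      (forall x l, l \in L -> x \notin l -> #|[set y in l | collinear x y]| = 1)].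

Definition is_arc (A : {set P}) : Prop :=
  forall x y, x \in A -> y \in A -> x != y -> ~~ collinear x y.

Definition is_karc (k : nat) (A : {set P}) : Prop := is_arc A /\ #|A| = k.

Definition complete_karc (k : nat) (A : {set P}) : Prop :=
  is_karc k A /\ ~ (exists B : {set P}, is_karc k.+1 B /\ A \subset B).

End GQ.

Section Rep.
Local Open Scope group_scope.
Variables (P : finType) (L : {set {set P}}) (R : groupType) (r : P -> R).

Inductive gen_by : R -> Prop :=
  | gen_r x : gen_by (r x)
  | gen_1 : gen_by 1
  | gen_mul g h : gen_by g -> gen_by h -> gen_by (g * h)
  | gen_inv g : gen_by g -> gen_by g^-1.

Definition klein4 (a b c : R) : Prop :=
  let K := [:: 1; a; b; c] in
  [/\ uniq K,
      (forall g h, g \in K -> h \in K -> g * h \in K),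
      (forall g, g \in K -> g^-1 \in K) &
      (forall g, g \in K -> g * g = 1)].

(** psi x = <r x> = {1, r x} when r x has order 2 *)
Definition psi (x : P) : pred R := [pred g | (g == 1) || (g == r x)].

Definition is_representation : Prop :=
  [/\
      (forall x, r x != 1 /\ r x * r x = 1),
      (forall g : R, gen_by g) &
      (forall l x y z, l \in L -> l = [set x; y; z] ->
         x != y -> y != z -> x != z -> klein4 (r x) (r y) (r z))].

Definition faithful : Prop := forall x y, psi x =i psi y -> x = y.

End Rep.

(** |G| = n for a (possibly infinite a priori) group type *)
Definition has_order (G : Type) (n : nat) : Prop :=
  exists f : 'I_n -> G, bijective f.

From HB Require Import structures.
From mathcomp Require Import all_boot.
Set Implicit Arguments. Unset Strict Implicit. Unset Printing Implicit Defensive.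

(* For a line {u, v, w} the Klein four-group condition gives r u * r v = r w,
   so products of the involutions r x follow the geometry.  If r a r b r c = r x
   for a 3-arc {a, b, c}, comparing {a,b}^perp with {a,c}^perp and {c,x}^perp
   shows that x is collinear with a or c, say with c; then r a r b = r y for
   the third point y on the line xc.  Every point of {a,b}^perp is collinear
   with y, and every line through such a point meets {a, b, y}, whence t = 2.
   For z1 != z2 in {a,b}^perp the involutions r a, r b, r z1, r z2 commute,
   every r x is a product of a subset of them and every nonempty such product
   is some r x' != 1, so |R| = 16.  Finally the line joining y to a point of
   {a,b}^perp not collinear with c carries a point extending the arc. *)

Lemma inj_surj_bijective (T : finType) (U : eqType) (f : T -> U) (x0 : T) :
  injective f -> (forall u, exists x, f x = u) -> bijective f.
Proof.
move=> finj fsurj; exists (fun u => odflt x0 [pick x | f x == u]) => [x | u].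
  by case: pickP => [y /eqP /finj | /(_ x)]; rewrite ?eqxx.
have [x <-] := fsurj u; by case: pickP => [y /eqP | /(_ x)]; rewrite ?eqxx.
Qed.

Lemma has_order_bijective (T : finType) (U : Type) (f : T -> U) :
  bijective f -> has_order U #|T|.
Proof.
move=> fbij; exists (f \o enum_val); apply: bij_comp fbij _.
exact: Bijective enum_valK enum_rankK.
Qed.

Section FourInvolutions.
Local Open Scope group_scope.
Variables (G : groupType) (a b c d : G).
Hypotheses (aa : a * a = 1) (bb : b * b = 1) (cc : c * c = 1) (dd : d * d = 1).
Hypotheses (cab : commute a b) (cac : commute a c) (cad : commute a d)
  (cbc : commute b c) (cbd : commute b d) (ccd : commute c d).

Definition word (e : bool * bool * bool * bool) : G :=
  let: (e0, e1, e2, e3) := e in a ^+ e0 * (b ^+ e1 * (c ^+ e2 * d ^+ e3)).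

Definition addb4 (e f : bool * bool * bool * bool) :=
  let: (e0, e1, e2, e3) := e in let: (f0, f1, f2, f3) := f in
  (e0 (+) f0, e1 (+) f1, e2 (+) f2, e3 (+) f3).

Lemma expgb_addb (g : G) (x y : bool) : g * g = 1 -> g ^+ x * g ^+ y = g ^+ (x (+) y).
Proof. by case: x; case: y; rewrite ?expg0 ?expg1 ?mulg1 ?mul1g. Qed.

Lemma mulgCA_commute (x y z : G) : commute x y -> y * (x * z) = x * (y * z).
Proof. by move=> cxy; rewrite !mulgA cxy. Qed.

Lemma wordM e f : word e * word f = word (addb4 e f).
Proof.
case: e f => [[[e0 e1] e2] e3] [[[f0 f1] f2] f3] /=.
rewrite -!mulgA.
rewrite !(mulgCA_commute _ (commuteX2 _ _ cad)) !(mulgCA_commute _ (commuteX2 _ _ cac)).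
rewrite !(mulgCA_commute _ (commuteX2 _ _ cab)) mulgA expgb_addb //; congr (_ * _).
rewrite !(mulgCA_commute _ (commuteX2 _ _ cbd)) !(mulgCA_commute _ (commuteX2 _ _ cbc)).
rewrite mulgA expgb_addb //; congr (_ * _).
by rewrite (mulgCA_commute _ (commuteX2 _ _ ccd)) mulgA expgb_addb // expgb_addb.
Qed.

Lemma word0 : word (false, false, false, false) = 1.
Proof. by rewrite /= !expg0 !mulg1. Qed.

Lemma wordV e : (word e)^-1 = word e.
Proof.
apply: mulg1_eq; rewrite wordM -word0.
by case: e => [[[[] []] []] []].
Qed.

Lemma word_split e0 e1 e2 e3 :
  word (e0, e1, e2, e3) = (a ^+ e0 * b ^+ e1) * (c ^+ e2 * d ^+ e3).
Proof. by rewrite /= !mulgA. Qed.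

Lemma word_inj :
  (forall e, word e = 1 -> e = (false, false, false, false)) -> injective word.
Proof.
move=> word_eq1 e f efE.
have sum_eq1 : word (addb4 e f) = 1.
  by rewrite -wordM efE wordM -word0; case: f {efE} => [[[[] []] []] []].
move: (word_eq1 _ sum_eq1); clear efE sum_eq1.
case: e f => [[[e0 e1] e2] e3] [[[f0 f1] f2] f3] /= [].
by do 4![move/negbT; rewrite negb_add => /eqP ->].
Qed.

Lemma gen_by_word (T : finType) (s : T -> G) :
  (forall x, exists e, word e = s x) -> forall g, gen_by s g -> exists e, word e = g.
Proof.
move=> s_word g; elim=> [x | | g1 g2 _ [e1 <-] _ [e2 <-] | g1 _ [e <-]] //.
- by exists (false, false, false, false); rewrite word0.
- by exists (addb4 e1 e2); rewrite wordM.
- by exists e; rewrite wordV.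
Qed.

Lemma has_order_words (T : finType) (s : T -> G) :
  (forall g, gen_by s g) -> (forall x, exists e, word e = s x) ->
  (forall e, word e = 1 -> e = (false, false, false, false)) -> has_order G 16.
Proof.
move=> gen s_word word_eq1.
have word_onto g : exists e, word e = g by apply: gen_by_word s_word g (gen g).
have := has_order_bijective (inj_surj_bijective (false, false, false, false)
  (word_inj word_eq1) word_onto).
by rewrite !card_prod card_bool.
Qed.

End FourInvolutions.

Lemma card_set3 (T : finType) (u v w : T) :
  u != v -> v != w -> u != w -> #|[set u; v; w]| = 3.
Proof. by move=> uv vw uw; rewrite -setUA cardsU1 cards2 !inE negb_or uv uw vw. Qed.

Lemma card_set3_neq (T : finType) (u v w : T) :
  #|[set u; v; w]| = 3 -> [/\ u != v, v != w & u != w].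
Proof.
rewrite -setUA cardsU1 cards2 !inE negb_or.
by case: (u == v); case: (u == w); case: (v == w).
Qed.

Lemma card3_mem (T : finType) (A : {set T}) (u v w x : T) : #|A| = 3 ->
  u \in A -> v \in A -> w \in A -> u != v -> v != w -> u != w ->
  x \in A -> [|| x == u, x == v | x == w].
Proof.
move=> A3 uA vA wA uv vw uw xA.
have sub : [set u; v; w] \subset A.
  by apply/subsetP => z; rewrite !inE => /orP [/orP [] | ] /eqP ->.
have /subset_cardP/(_ sub)/(_ x) := etrans (card_set3 uv vw uw) (esym A3).
by rewrite xA !inE -orbA.
Qed.

Lemma mem_set3l (T : finType) (u v w : T) : u \in [set u; v; w].
Proof. by rewrite !inE eqxx. Qed.

Lemma mem_set3m (T : finType) (u v w : T) : v \in [set u; v; w].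
Proof. by rewrite !inE eqxx orbT. Qed.

Lemma mem_set3r (T : finType) (u v w : T) : w \in [set u; v; w].
Proof. by rewrite !inE eqxx orbT. Qed.

Lemma set3C13 (T : finType) (u v w : T) : [set w; v; u] = [set u; v; w].
Proof. by apply/setP => z; rewrite !inE orbC [_ || (z == v)]orbC orbA. Qed.

Section GeneralizedQuadrangle.
Variables (P : finType) (L : {set {set P}}) (t : nat).
Hypothesis gq : is_GQ2 L t.
Local Notation coll := (collinear L).

Lemma card_line l : l \in L -> #|l| = 3.
Proof. by case: gq => h _ _ _ _; apply: h. Qed.

Lemma card_lines_through x : #|[set l in L | x \in l]| = t.+1.
Proof. by case: gq => _ h _ _ _; apply: h. Qed.

Lemma eq_line l1 l2 x y : l1 \in L -> l2 \in L -> x != y ->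
  x \in l1 -> y \in l1 -> x \in l2 -> y \in l2 -> l1 = l2.
Proof. by case: gq => _ _ h _ _; apply: h. Qed.

Lemma card_coll_on_line x l :
  l \in L -> x \notin l -> #|[set y in l | coll x y]| = 1.
Proof. by case: gq => _ _ _ _ h; apply: h. Qed.

Lemma coll_sym x y : coll x y = coll y x.
Proof.
rewrite /collinear eq_sym; congr (_ && _).
by apply/existsP/existsP => -[l /and3P [lL xl yl]]; exists l; rewrite lL xl yl.
Qed.

Lemma coll_neq x y : coll x y -> x != y.
Proof. by case/andP. Qed.

Lemma line_coll l x y : l \in L -> x \in l -> y \in l -> x != y -> coll x y.
Proof.
by move=> lL xl yl xy; rewrite /collinear xy; apply/existsP; exists l; rewrite lL xl yl.
Qed.

Lemma coll_on_line_uniq l x u v : l \in L -> x \notin l -> u \in l -> v \in l ->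
  coll x u -> coll x v -> u = v.
Proof.
move=> lL xl ul vl xu xv; apply/eqP/negPn/negP => uv.
have /eqP := card_coll_on_line lL xl; apply/negP; rewrite neq_ltn; apply/orP; right.
by apply/card_gt1P; exists u, v; rewrite !inE ul vl xu xv.
Qed.

Lemma exists_coll_on_line l x : l \in L -> x \notin l -> exists2 y, y \in l & coll x y.
Proof.
move=> lL xl; have : [set y in l | coll x y] != set0.
  by rewrite -card_gt0 card_coll_on_line.
by case/set0Pn => y; rewrite inE => /andP [yl xy]; exists y.
Qed.

Definition line3 (u v w : P) :=
  [&& [set u; v; w] \in L, u != v, v != w & u != w].

Lemma line3C12 u v w : line3 u v w -> line3 v u w.
Proof.
case/and4P => lL uv vw uw; rewrite /line3 (eq_sym v) uv uw vw !andbT.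
suff -> : [set v; u; w] = [set u; v; w] by [].
by apply/setP => z; rewrite !inE [(z == v) || _]orbC.
Qed.

Lemma line3C23 u v w : line3 u v w -> line3 u w v.
Proof.
case/and4P => lL uv vw uw; rewrite /line3 uw uv (eq_sym w) vw !andbT.
suff -> : [set u; w; v] = [set u; v; w] by [].
by apply/setP => z; rewrite !inE orbAC.
Qed.

Lemma line3_rot u v w : line3 u v w -> line3 v w u.
Proof. by move/line3C12/line3C23. Qed.

Lemma line3_coll u v w : line3 u v w -> coll u v.
Proof.
by case/and4P => lL uv _ _; apply: line_coll lL _ _ uv; rewrite ?mem_set3l ?mem_set3m.
Qed.

Lemma line3_coll13 u v w : line3 u v w -> coll u w.
Proof. by move/line3C23/line3_coll. Qed.

Lemma line3_coll23 u v w : line3 u v w -> coll v w.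
Proof. by move/line3_rot/line3_coll. Qed.

Lemma coll_line3 u v : coll u v -> exists w, line3 u v w.
Proof.
case/andP => uv /existsP [l /and3P [lL ul vl]].
have : 0 < #|l :\ u :\ v|.
  move: (cardsD1 u l) (cardsD1 v (l :\ u)); rewrite ul card_line // !inE vl eq_sym uv /=.
  by move=> e1 e2; move: e1; rewrite e2 => -[]; case: #|_|.
case/card_gt0P => w; rewrite !inE => /and3P [wv wu wl].
exists w; rewrite /line3 uv eq_sym wv eq_sym wu.
suff -> : [set u; v; w] = l by rewrite lL.
apply/eqP; rewrite eqEcard card_line // card_set3 // 1?eq_sym // leqnn andbT.
by apply/subsetP => z; rewrite !inE => /orP [/orP [] | ] /eqP ->.
Qed.

Lemma line3_uniq u v w w' : line3 u v w -> line3 u v w' -> w = w'.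
Proof.
case/and4P => lL uv _ _ /and4P [lL' _ vw' uw'].
have := eq_line lL lL' uv (mem_set3l _ _ _) (mem_set3m _ _ _)
  (mem_set3l _ _ _) (mem_set3m _ _ _).
move/setP/(_ w'); rewrite !inE eqxx orbT !(eq_sym w') (negbTE vw') (negbTE uw').
by move/eqP.
Qed.

Lemma coll3_line3 u v w : coll u v -> coll v w -> coll u w -> line3 u v w.
Proof.
move=> uv vw uw; have [w' uvw'] := coll_line3 uv.
have lL : [set u; v; w'] \in L by case/and4P: uvw'.
case wl : (w \in [set u; v; w']).
  move: wl; rewrite !inE => /orP [/orP [] | ] /eqP wE.
  - by move: (coll_neq uw); rewrite wE eqxx.
  - by move: (coll_neq vw); rewrite wE eqxx.
  - by rewrite wE.
have := coll_on_line_uniq lL (negbT wl) (mem_set3l _ _ _) (mem_set3m _ _ _).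
by rewrite !(coll_sym w) => /(_ uw vw) uvE; move: (coll_neq uv); rewrite uvE eqxx.
Qed.

Lemma line3_coll_some u v w x : line3 u v w -> x != u -> x != v -> x != w ->
  [|| coll x u, coll x v | coll x w].
Proof.
move=> uvw xu xv xw; have lL : [set u; v; w] \in L by case/and4P: uvw.
have [|y] := exists_coll_on_line (x := x) lL; first by rewrite !inE !negb_or xu xv xw.
by rewrite !inE => /orP [/orP [] | ] /eqP -> ->; rewrite ?orbT.
Qed.

Definition perp (p q : P) := [set z | coll p z && coll q z].

Lemma perp_ncoll p q z z' : p != q -> z \in perp p q -> z' \in perp p q ->
  ~~ coll z z'.
Proof.
move=> pq; rewrite !inE => /andP [pz qz] /andP [pz' qz']; apply/negP => zz'.
have := line3_uniq (line3_rot (coll3_line3 pz zz' pz')) (line3_rot (coll3_line3 qz zz' qz')).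
by move=> pqE; move: pq; rewrite pqE eqxx.
Qed.

Lemma card_perp p q : p != q -> ~~ coll p q -> #|perp p q| = t.+1.
Proof.
move=> pq npq; pose S := [set l in L | p \in l].
have qS l : l \in S -> q \notin l.
  by rewrite inE => /andP [lL pl]; apply/negP => ql; move: npq; rewrite (line_coll lL pl ql).
pose f (l : {set P}) := odflt p [pick y in l | coll q y].
have fP l : l \in S -> (f l \in l) && coll q (f l).
  move=> lS; have := lS; rewrite inE => /andP [lL _].
  have [y yl qy] := exists_coll_on_line lL (qS l lS).
  by rewrite /f; case: pickP => [z /= -> // | /(_ y)]; rewrite yl qy.
have fp l : l \in S -> f l != p.
  by move=> /fP /andP [_ qf]; apply/eqP => fE; move: npq; rewrite coll_sym -fE qf.
have -> : perp p q = f @: S.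
  apply/setP => z; apply/idP/imsetP.
  - rewrite inE => /andP [pz qz]; case/andP: (pz) => _ /existsP [l /and3P [lL pl zl]].
    have lS : l \in S by rewrite inE lL pl.
    exists l => //; case/andP: (fP l lS) => fl qf.
    exact: coll_on_line_uniq lL (qS l lS) zl fl qz qf.
  - case=> l lS ->; rewrite inE; case/andP: (fP l lS) => fl ->; rewrite andbT.
    have := lS; rewrite inE => /andP [lL pl].
    by rewrite (line_coll lL pl fl) // eq_sym fp.
rewrite card_in_imset ?card_lines_through // => l1 l2 l1S l2S fE.
have := l1S; have := l2S; rewrite !inE => /andP [l2L pl2] /andP [l1L pl1].
apply: (eq_line l1L l2L (x := p) (y := f l1)) => //; first by rewrite eq_sym fp.
- by case/andP: (fP l1 l1S).
- by rewrite fE; case/andP: (fP l2 l2S).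
Qed.

Lemma perp_two_points p q : p != q -> ~~ coll p q ->
  exists z1 z2, [/\ z1 \in perp p q, z2 \in perp p q & z1 != z2].
Proof.
move=> pq npq; suff t_gt0 : 0 < t.
  have : 1 < #|perp p q| by rewrite card_perp.
  by case/card_gt1P => z1 [z2 [z1P z2P z12]]; exists z1, z2.
have [z] : exists z, z \in perp p q by apply/set0Pn; rewrite -card_gt0 card_perp.
rewrite inE => /andP [/andP [_ /existsP [l1 /and3P [l1L pl1 zl1]]]].
case/andP => _ /existsP [l2 /and3P [l2L ql2 zl2]].
have : 1 < #|[set l in L | z \in l]|.
  apply/card_gt1P; exists l1, l2; rewrite !inE l1L l2L zl1 zl2; split => //.
  by apply/eqP => l12; move: npq; rewrite (line_coll l1L pl1 _ pq) // l12.
by rewrite card_lines_through.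
Qed.

Lemma line3_neq s u v u' v' : line3 s u v -> ~~ coll u u' -> u != u' ->
  [set s; u; v] != [set s; u'; v'].
Proof.
case/and4P => lL _ _ _ nuu' uu'; apply: contra nuu' => /eqP lE.
by rewrite (line_coll lL (mem_set3m _ _ _) _ uu') // lE mem_set3m.
Qed.

Lemma lines_through_t2 s z1 z2 z3 s1 s2 s3 w : t = 2 ->
  line3 s z1 s1 -> line3 s z2 s2 -> line3 s z3 s3 ->
  ~~ coll z1 z2 -> ~~ coll z2 z3 -> ~~ coll z1 z3 ->
  z1 != z2 -> z2 != z3 -> z1 != z3 -> coll s w ->
  [|| w \in [set z1; s1], w \in [set z2; s2] | w \in [set z3; s3]].
Proof.
move=> t2 l1 l2 l3 n12 n23 n13 d12 d23 d13 sw.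
pose S := [set l in L | s \in l].
have lS u v : line3 s u v -> [set s; u; v] \in S.
  by case/and4P => lL _ _ _; rewrite inE lL mem_set3l.
case/andP: sw => sw /existsP [l /and3P [lL sl wl]].
have S3 : #|S| = 3 by rewrite card_lines_through t2.
have lS' : l \in S by rewrite inE lL sl.
have := card3_mem S3 (lS _ _ l1) (lS _ _ l2) (lS _ _ l3) (line3_neq s2 l1 n12 d12)
  (line3_neq s3 l2 n23 d23) (line3_neq s3 l1 n13 d13) lS'.
by case/or3P => /eqP lE; move: wl; rewrite lE !inE (eq_sym w) (negbTE sw) /= => ->;
  rewrite ?orbT.
Qed.

Lemma karc3_not_complete a b c d : is_karc L 3 [set a; b; c] ->
  d \notin [set a; b; c] -> ~~ coll a d -> ~~ coll b d -> ~~ coll c d ->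
  ~ complete_karc L 3 [set a; b; c].
Proof.
move=> [arc card3] dA nad nbd ncd [_]; apply; exists (d |: [set a; b; c]).
split; last exact: subsetUr.
split; last by rewrite cardsU1 dA card3.
have nd x : x \in [set a; b; c] -> ~~ coll x d.
  by rewrite !inE => /orP [/orP [] | ] /eqP ->.
move=> u v; rewrite !in_setU1 => /orP [/eqP -> | uA] /orP [/eqP -> | vA];
  rewrite ?eqxx //.
- by rewrite coll_sym => _; apply: nd.
- by move=> _; apply: nd.
- exact: arc.
Qed.

Lemma line3_ncoll_shift p q z p' q' : ~~ coll p q -> line3 p z p' -> line3 q z q' ->
  ~~ coll p' q'.
Proof.
move=> npq pzp' qzq'; apply/negP => p'q'.
have zp'q' := coll3_line3 (line3_coll23 pzp') p'q' (line3_coll23 qzq').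
move: qzq'; rewrite (line3_uniq zp'q' (line3C23 (line3C12 pzp'))) => /line3_coll13.
by rewrite coll_sym (negbTE npq).
Qed.

Lemma karc3P a b c : is_karc L 3 [set a; b; c] ->
  [/\ a != b, b != c, a != c & [/\ ~~ coll a b, ~~ coll b c & ~~ coll a c]].
Proof.
case=> arc /card_set3_neq [ab bc ac]; split => //.
by split; apply: arc; rewrite ?mem_set3l ?mem_set3m ?mem_set3r.
Qed.

Section Representation.
Local Open Scope group_scope.
Variables (R : groupType) (r : P -> R).
Hypotheses (rep : is_representation L r) (faithful_r : faithful r).

Lemma r_inj : injective r.
Proof. by move=> x y rxy; apply: faithful_r => g; rewrite !inE rxy. Qed.

Lemma r_neq1 x : r x != 1.
Proof. by case: rep => inv _ _; case: (inv x). Qed.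

Lemma rr_eq1 x : r x * r x = 1.
Proof. by case: rep => inv _ _; case: (inv x). Qed.

Lemma r_inv x : (r x)^-1 = r x.
Proof. exact: mulg1_eq (rr_eq1 x). Qed.

Lemma r_prodC u v y : r u * r v = r y -> r v * r u = r y.
Proof. by move=> uvy; rewrite -(r_inv u) -(r_inv v) -invgM uvy r_inv. Qed.

Lemma r_prod_neq u v y : r u * r v = r y -> u != y.
Proof.
move=> uvy; apply: contra_neq (r_neq1 v) => uy.
by apply: (mulgI (r y)); rewrite -{1}uy uvy mulg1.
Qed.

Lemma r_prod_neqr u v y : r u * r v = r y -> v != y.
Proof. by move/r_prodC/r_prod_neq. Qed.

Lemma line3_r u v w : line3 u v w -> r u * r v = r w.
Proof.
case/and4P => lL uv vw uw; case: rep => _ _ klein.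
case: (klein _ u v w lL erefl uv vw uw) => _ Kmul _ _.
have ruv : r u != r v by rewrite (inj_eq r_inj).
have := Kmul (r u) (r v); rewrite !inE !eqxx !orbT => /(_ isT isT).
case/or4P => /eqP uvE //.
- by move: (rr_eq1 u); rewrite -uvE => /mulgI /eqP; rewrite (negbTE ruv).
- by move: uvE; rewrite -{2}(mulg1 (r u)) => /mulgI /eqP; rewrite (negbTE (r_neq1 v)).
- by move: uvE; rewrite -{2}(mul1g (r v)) => /mulIg /eqP; rewrite (negbTE (r_neq1 u)).
Qed.

Lemma coll_commute u v : coll u v -> commute (r u) (r v).
Proof.
by case/coll_line3 => w uvw; rewrite /commute (line3_r uvw) (line3_r (line3C12 uvw)).
Qed.

Lemma r_prod_commute u v y : r u * r v = r y -> commute (r u) (r v).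
Proof. by move=> uvy; rewrite /commute uvy (r_prodC uvy). Qed.

Lemma r_prod_expg_mem u v w (e0 e1 : bool) : r u * r v = r w -> e0 || e1 ->
  exists2 x, x \in [set u; v; w] & r u ^+ e0 * r v ^+ e1 = r x.
Proof.
move=> uvw; case: e0; case: e1 => // _; rewrite ?expg1 ?expg0 ?mulg1 ?mul1g.
- by exists w; rewrite ?mem_set3r.
- by exists u; rewrite ?mem_set3l.
- by exists v; rewrite ?mem_set3m.
Qed.

Lemma mem_r_prod_expg u v w x : r u * r v = r w -> x \in [set u; v; w] ->
  exists e : bool * bool, r u ^+ e.1 * r v ^+ e.2 = r x.
Proof.
move=> uvw; rewrite !inE => /orP [/orP [] | ] /eqP ->.
- by exists (true, false); rewrite /= expg1 mulg1.
- by exists (false, true); rewrite /= expg1 mul1g.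
- by exists (true, true); rewrite /= !expg1.
Qed.

Lemma line3_r_shift p q z p' q' : line3 p z p' -> line3 q z q' ->
  r p' * r q' = r p * r q.
Proof.
move=> pzp' qzq'; rewrite -(line3_r pzp') -(r_prodC (line3_r qzq')).
by rewrite -mulgA (mulgA (r z)) rr_eq1 mul1g.
Qed.

Lemma r_prod_line3 u v y : r u * r v = r y -> coll u y -> line3 u y v.
Proof.
move=> uvy /coll_line3 [w uyw]; suff <- : w = v by [].
by apply: r_inj; rewrite -(line3_r uyw) -uvy mulgA rr_eq1 mul1g.
Qed.

Lemma r_prod_ncoll u v y : r u * r v = r y -> ~~ coll u v -> ~~ coll u y.
Proof. by move=> uvy nuv; apply/negP => /(r_prod_line3 uvy) /line3_coll13; apply/negP. Qed.

Lemma r_prod_ncollr u v y : r u * r v = r y -> ~~ coll u v -> ~~ coll v y.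
Proof. by move=> /r_prodC vuy nuv; apply: (r_prod_ncoll vuy); rewrite coll_sym. Qed.

Lemma perp_coll_prod p q y z : ~~ coll p q -> r p * r q = r y ->
  coll z p -> coll z q -> coll z y.
Proof.
move=> npq pqy zp zq; apply/negPn/negP => nzy.
have [p' pzp'] : exists p', line3 p z p' by apply: coll_line3; rewrite coll_sym.
have [q' qzq'] : exists q', line3 q z q' by apply: coll_line3; rewrite coll_sym.
have p'q'y : r p' * r q' = r y by rewrite (line3_r_shift pzp' qzq').
have npy := r_prod_ncoll pqy npq.
have yz : y != z by apply: contraNneq npy => ->; rewrite coll_sym.
have yp' : y != p' by apply: contraNneq npy => ->; apply: line3_coll13 pzp'.
have yp : y != p by rewrite eq_sym (r_prod_neq pqy).
have : coll y p'.
  have := line3_coll_some pzp' yp yz yp'.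
  by rewrite coll_sym (negbTE npy) coll_sym (negbTE nzy).
rewrite coll_sym => /(r_prod_line3 p'q'y) /line3_coll13.
by apply/negP; apply: line3_ncoll_shift npq pzp' qzq'.
Qed.

Lemma coll_triple_prod a b c x u : a != b -> ~~ coll a c -> ~~ coll b c ->
  r a * r b * r c = r x -> coll u a -> coll u b -> ~~ coll u c -> coll x c.
Proof.
move=> ab nac nbc abcx ua ub nuc.
have [a' aua'] : exists a', line3 a u a' by apply: coll_line3; rewrite coll_sym.
have [b' bub'] : exists b', line3 b u b' by apply: coll_line3; rewrite coll_sym.
have ca' : coll c a'.
  have ca : c != a by apply: contraNneq nuc => ->.
  have cu : c != u by apply: contraNneq nac => ->; rewrite coll_sym.
  have ca'' : c != a' by apply: contraNneq nac => ->; apply: line3_coll13 aua'.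
  have := line3_coll_some aua' ca cu ca''.
  by rewrite coll_sym (negbTE nac) coll_sym (negbTE nuc).
have cb' : coll c b'.
  have cb : c != b by apply: contraNneq nuc => ->.
  have cu : c != u by apply: contraNneq nbc => ->; rewrite coll_sym.
  have cb'' : c != b' by apply: contraNneq nbc => ->; apply: line3_coll13 bub'.
  have := line3_coll_some bub' cb cu cb''.
  by rewrite coll_sym (negbTE nbc) coll_sym (negbTE nuc).
have [w b'cw] : exists w, line3 b' c w by apply: coll_line3; rewrite coll_sym.
have a'wx : r a' * r w = r x.
  by rewrite -(line3_r b'cw) mulgA (line3_r_shift aua' bub').
have na'w : ~~ coll a' w.
  apply/negP => a'w.
  have cwa' : line3 c w a' by apply: coll3_line3 (line3_coll23 b'cw) _ ca'; rewrite coll_sym.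
  move: bub'; rewrite -(line3_uniq cwa' (line3C23 (line3C12 b'cw))) => bua'.
  by move: ab; rewrite (line3_uniq (line3_rot aua') (line3_rot bua')) eqxx.
by rewrite coll_sym; apply: perp_coll_prod na'w a'wx ca' (line3_coll23 b'cw).
Qed.

Lemma ncoll_perp_coll p q y w z : ~~ coll p q -> r p * r q = r y ->
  ~~ coll w p -> ~~ coll w q -> ~~ coll w y -> w != p -> w != q ->
  z \in perp p q -> w != z -> coll w z.
Proof.
move=> npq pqy nwp nwq nwy wp wq; rewrite inE => /andP [pz qz] wz.
apply/negPn/negP => nwz.
have [p' pzp'] := coll_line3 pz; have [q' qzq'] := coll_line3 qz.
have wp' : coll w p'.
  have wp'' : w != p' by apply: contraNneq nwp => ->; rewrite coll_sym (line3_coll13 pzp').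
  by have := line3_coll_some pzp' wp wz wp''; rewrite (negbTE nwp) (negbTE nwz).
have wq' : coll w q'.
  have wq'' : w != q' by apply: contraNneq nwq => ->; rewrite coll_sym (line3_coll13 qzq').
  by have := line3_coll_some qzq' wq wz wq''; rewrite (negbTE nwq) (negbTE nwz).
have p'q'y : r p' * r q' = r y by rewrite (line3_r_shift pzp' qzq').
by move: nwy; rewrite (perp_coll_prod (line3_ncoll_shift npq pzp' qzq') p'q'y wp' wq').
Qed.

Section PerpPair.
Variables (p q y z1 z2 : P).
Hypotheses (pq : p != q) (npq : ~~ coll p q) (pqy : r p * r q = r y).
Hypotheses (z1P : z1 \in perp p q) (z2P : z2 \in perp p q) (z12 : z1 != z2).

Lemma perp_coll_y z : z \in perp p q -> coll z y.
Proof.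
by rewrite inE => /andP [pz qz]; apply: perp_coll_prod npq pqy _ _; rewrite coll_sym.
Qed.

Lemma line_through_perp l : l \in L -> z1 \in l -> [|| p \in l, q \in l | y \in l].
Proof.
move=> lL z1l; apply/negPn/negP; rewrite !negb_or => /and3P [pl ql yl].
have z2l : z2 \notin l.
  by apply: contra (perp_ncoll pq z1P z2P) => z2l; apply: line_coll lL z1l z2l z12.
have ncoll_l x w : x \notin l -> coll z1 x -> w \in l -> w != z1 -> ~~ coll w x.
  move=> xl z1x wl wz1; apply: contra wz1 => wx; apply/eqP.
  by apply: coll_on_line_uniq lL xl wl z1l _ _; rewrite coll_sym.
move: z1P; rewrite inE => /andP [pz1 qz1].
have z2coll w : w \in l -> w != z1 -> coll w z2.
  move=> wl wz1; apply: ncoll_perp_coll npq pqy _ _ _ _ _ z2P _.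
  - by apply: ncoll_l pl _ wl wz1; rewrite coll_sym.
  - by apply: ncoll_l ql _ wl wz1; rewrite coll_sym.
  - by apply: ncoll_l yl (perp_coll_y z1P) wl wz1.
  - by apply: contraNneq pl => <-.
  - by apply: contraNneq ql => <-.
  - by apply: contraNneq z2l => <-.
have : 1 < #|l :\ z1| by move: (cardsD1 z1 l); rewrite z1l card_line // add1n => -[<-].
case/card_gt1P => w [w' [wl w'l ww']]; move: wl w'l; rewrite !inE.
move=> /andP [wz1 wl] /andP [w'z1 w'l]; move/eqP: ww'; apply.
have wz2 := z2coll w wl wz1; have w'z2 := z2coll w' w'l w'z1.
by apply: (coll_on_line_uniq lL z2l wl w'l); rewrite coll_sym.
Qed.

Lemma t_eq2 : t = 2.
Proof.
move: (z1P); rewrite inE => /andP [pz1 qz1].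
have [p1 z1pp1] : exists p1, line3 z1 p p1 by apply: coll_line3; rewrite coll_sym.
have [q1 z1qq1] : exists q1, line3 z1 q q1 by apply: coll_line3; rewrite coll_sym.
have [y1 z1yy1] := coll_line3 (perp_coll_y z1P).
have line_eq x x1 l : line3 z1 x x1 -> l \in L -> z1 \in l -> x \in l ->
    l = [set z1; x; x1].
  case/and4P => lL z1x _ _ lL' z1l xl.
  exact: eq_line lL' lL z1x z1l xl (mem_set3l _ _ _) (mem_set3m _ _ _).
have lines : [set l in L | z1 \in l] =
    [set [set z1; p; p1]; [set z1; q; q1]; [set z1; y; y1]].
  apply/setP => l; rewrite !inE; apply/andP/idP => [[lL z1l] | ].
    case/or3P: (line_through_perp lL z1l) => [pl | ql | yl].
    - by rewrite (line_eq _ _ _ z1pp1 lL z1l pl) eqxx.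
    - by rewrite (line_eq _ _ _ z1qq1 lL z1l ql) eqxx orbT.
    - by rewrite (line_eq _ _ _ z1yy1 lL z1l yl) eqxx orbT.
  have lineL x x1 : line3 z1 x x1 -> [set z1; x; x1] \in L by case/and4P.
  by case/orP => [/orP [] | ] /eqP ->; rewrite mem_set3l lineL.
move: (card_lines_through z1); rewrite lines card_set3 => [[] // | | |].
- exact: line3_neq z1pp1 npq pq.
- exact: line3_neq z1qq1 (r_prod_ncollr pqy npq) (r_prod_neqr pqy).
- exact: line3_neq z1pp1 (r_prod_ncoll pqy npq) (r_prod_neq pqy).
Qed.

Lemma perp_thirds_coll p1 q2 : line3 p z1 p1 -> line3 q z2 q2 -> coll p1 q2.
Proof.
move=> pz1p1 qz2q2; rewrite coll_sym.
have n12 := perp_ncoll pq z1P z2P.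
move: (z1P) (z2P); rewrite !inE => /andP [pz1 qz1] /andP [pz2 qz2].
have q2p : q2 != p by apply: contraNneq npq => <-; rewrite coll_sym (line3_coll13 qz2q2).
have q2z1 : q2 != z1 by apply: contraNneq n12 => <-; rewrite coll_sym (line3_coll23 qz2q2).
have q2p1 : q2 != p1.
  apply: contraNneq z12 => q2E; move: pz1p1; rewrite -q2E => pz1q2.
  have pq2z2 : line3 p q2 z2.
    by apply: coll3_line3 (line3_coll13 pz1q2) _ pz2; rewrite coll_sym (line3_coll23 qz2q2).
  by apply/eqP; apply: line3_uniq (line3C23 pz1q2) pq2z2.
case/or3P: (line3_coll_some pz1p1 q2p q2z1 q2p1) => // [q2p' | q2z1'].
- have z2q2p : line3 z2 q2 p.
    by apply: coll3_line3 (line3_coll23 qz2q2) q2p' _; rewrite coll_sym.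
  by move: pq; rewrite (line3_uniq z2q2p (line3C23 (line3C12 qz2q2))) eqxx.
- have qq2z1 := coll3_line3 (line3_coll13 qz2q2) q2z1' qz1.
  by move: z12; rewrite (line3_uniq qq2z1 (line3C23 qz2q2)) eqxx.
Qed.

Lemma perp_prod : exists z3, r z1 * r z2 = r z3.
Proof.
move: (z1P) (z2P); rewrite !inE => /andP [pz1 qz1] /andP [pz2 qz2].
have [p1 pz1p1] := coll_line3 pz1; have [q2 qz2q2] := coll_line3 qz2.
have [w p1q2w] := coll_line3 (perp_thirds_coll pz1p1 qz2q2).
have wE : r w = r y * (r z1 * r z2).
  rewrite -(line3_r p1q2w) -(line3_r pz1p1) -(line3_r qz2q2) -pqy !mulgA.
  by rewrite -(mulgA (r p) (r z1)) -(coll_commute qz1) !mulgA.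
have yw : coll y w.
  have yq2 : y != q2.
    by apply: contraNneq (r_prod_ncollr pqy npq) => ->; apply: line3_coll13 qz2q2.
  have yp1 : y != p1.
    by apply: contraNneq (r_prod_ncoll pqy npq) => ->; apply: line3_coll13 pz1p1.
  have yw : y != w.
    apply: contraNneq z12 => yE; apply/eqP/r_inj; apply: (mulgI (r z1)).
    by rewrite rr_eq1; apply: (mulgI (r y)); rewrite -wE -yE mulg1.
  case/or3P: (line3_coll_some p1q2w yp1 yq2 yw) => // [yp1' | yq2'].
  - have z1p1y : line3 z1 p1 y.
      by apply: coll3_line3 (line3_coll23 pz1p1) _ (perp_coll_y z1P); rewrite coll_sym.
    move: (r_prod_neq pqy).
    by rewrite (line3_uniq (line3C23 (line3C12 pz1p1)) z1p1y) eqxx.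
  - have z2q2y : line3 z2 q2 y.
      by apply: coll3_line3 (line3_coll23 qz2q2) _ (perp_coll_y z2P); rewrite coll_sym.
    move: (r_prod_neqr pqy).
    by rewrite (line3_uniq (line3C23 (line3C12 qz2q2)) z2q2y) eqxx.
have [v ywv] := coll_line3 yw.
by exists v; rewrite -(line3_r ywv) wE mulgA rr_eq1 mul1g.
Qed.

Lemma ncoll_frame_eq x : x \notin [set p; q; y] ->
  (forall a, a \in [set p; q; y] -> ~~ coll a x) -> x = z1.
Proof.
move=> xA nax; have nxa a : a \in [set p; q; y] -> ~~ coll x a by rewrite coll_sym => /nax.
have xa a : a \in [set p; q; y] -> x != a by move=> aA; apply: contraNneq xA => ->.
apply/eqP/negPn/negP => xz1.
have := ncoll_perp_coll npq pqy (nxa _ (mem_set3l p q y)) (nxa _ (mem_set3m p q y))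
  (nxa _ (mem_set3r p q y)) (xa _ (mem_set3l p q y)) (xa _ (mem_set3m p q y)) z1P xz1.
case/andP => _ /existsP [l /and3P [lL xl z1l]].
have [a aA al] : exists2 a, a \in [set p; q; y] & a \in l.
  case/or3P: (line_through_perp lL z1l) => al; [exists p | exists q | exists y];
    by rewrite ?mem_set3l ?mem_set3m ?mem_set3r.
by move: (nxa a aA); rewrite (line_coll lL xl al (xa a aA)).
Qed.

Section PerpTriple.
Variable z3 : P.
Hypothesis z12z3 : r z1 * r z2 = r z3.
Local Notation word := (word (r p) (r q) (r z1) (r z2)).

Lemma perp_prod_mem : z3 \in perp p q.
Proof.
have n12 := perp_ncoll pq z1P z2P.
move: (z1P) (z2P); rewrite !inE => /andP [pz1 qz1] /andP [pz2 qz2].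
by rewrite (perp_coll_prod n12 z12z3 pz1 pz2) (perp_coll_prod n12 z12z3 qz1 qz2).
Qed.

Lemma coll_frame a b : a \in [set p; q; y] -> b \in [set z1; z2; z3] -> coll a b.
Proof.
have bP : b \in [set z1; z2; z3] -> b \in perp p q.
  by case/setUP => [/set2P [] | /set1P] ->; rewrite ?perp_prod_mem.
move=> aS /bP bP'; move: (bP'); rewrite inE => /andP [pb qb].
by move: aS; rewrite !inE => /orP [/orP [] | ] /eqP -> //; rewrite coll_sym perp_coll_y.
Qed.

Lemma word_eq_r e : e != (false, false, false, false) -> exists x, word e = r x.
Proof.
case: e => [[[e0 e1] e2] e3] e_neq0; rewrite word_split.
case A: (e0 || e1); case B: (e2 || e3).
- have [a aS ->] := r_prod_expg_mem pqy A; have [b bS ->] := r_prod_expg_mem z12z3 B.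
  by have [x abx] := coll_line3 (coll_frame aS bS); exists x; apply: line3_r.
- have [a _ ->] := r_prod_expg_mem pqy A.
  by move/norP: B => [/negbTE -> /negbTE ->]; exists a; rewrite !expg0 !mulg1.
- have [b _ ->] := r_prod_expg_mem z12z3 B.
  by move/norP: A => [/negbTE -> /negbTE ->]; exists b; rewrite !expg0 !mul1g.
- by move: e_neq0 A B; case: e0; case: e1; case: e2; case: e3.
Qed.

Lemma r_eq_word x : exists e, word e = r x.
Proof.
have wordA a : a \in [set p; q; y] -> exists e, word e = r a.
  case/(mem_r_prod_expg pqy) => [[e0 e1] aE]; exists (e0, e1, false, false).
  by rewrite word_split !expg0 !mulg1.
have wordB b : b \in [set z1; z2; z3] -> exists e, word e = r b.
  case/(mem_r_prod_expg z12z3) => [[e2 e3] bE]; exists (false, false, e2, e3).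
  by rewrite word_split !expg0 !mul1g.
have wordAB a b s : a \in [set p; q; y] -> b \in [set z1; z2; z3] -> line3 a b s ->
    exists e, word e = r s.
  case/(mem_r_prod_expg pqy) => [[e0 e1] aE] /(mem_r_prod_expg z12z3) [[e2 e3] bE] abs.
  by exists (e0, e1, e2, e3); rewrite word_split aE bE (line3_r abs).
case xA : (x \in [set p; q; y]); first exact: wordA.
have [/exists_inP [a aA ax] | nx] := boolP [exists a in [set p; q; y], coll a x].
  have n12 := perp_ncoll pq z1P z2P.
  have [s1 l1] := coll_line3 (coll_frame aA (mem_set3l z1 z2 z3)).
  have [s2 l2] := coll_line3 (coll_frame aA (mem_set3m z1 z2 z3)).
  have [s3 l3] := coll_line3 (coll_frame aA (mem_set3r z1 z2 z3)).
  case/or3P: (lines_through_t2 t_eq2 l1 l2 l3 n12 (r_prod_ncollr z12z3 n12)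
    (r_prod_ncoll z12z3 n12) z12 (r_prod_neqr z12z3) (r_prod_neq z12z3) ax)
    => /set2P [] ->;
    [apply: wordB | apply: wordAB aA _ l1 | apply: wordB | apply: wordAB aA _ l2
    | apply: wordB | apply: wordAB aA _ l3]; by rewrite !inE eqxx ?orbT.
rewrite (ncoll_frame_eq (negbT xA)); first by apply: wordB; rewrite mem_set3l.
by move=> a aA; apply: contra nx => ax; apply/exists_inP; exists a.
Qed.

End PerpTriple.

Lemma has_order16 : has_order R 16.
Proof.
have [z3 z12z3] := perp_prod.
move: (z1P) (z2P); rewrite !inE => /andP [pz1 qz1] /andP [pz2 qz2].
case: rep => _ gen _.
apply: (has_order_words (rr_eq1 p) (rr_eq1 q) (rr_eq1 z1) (rr_eq1 z2) (r_prod_commute pqy)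
  (coll_commute pz1) (coll_commute pz2) (coll_commute qz1) (coll_commute qz2)
  (r_prod_commute z12z3) gen (r_eq_word z12z3)).
move=> e e1; apply/eqP/negPn/negP => /(word_eq_r z12z3) [x xE].
by move: (r_neq1 x); rewrite -xE e1 eqxx.
Qed.

End PerpPair.

Lemma r_triple_rev a b c x : r a * r b * r c = r x -> r c * r b * r a = r x.
Proof. by move=> abcx; rewrite -(r_inv a) -(r_inv b) -(r_inv c) -!invgM mulgA abcx r_inv. Qed.

Lemma r_triple_rotl a b c x : r a * r b * r c = r x -> r b * r a * r x = r c.
Proof. by move=> <-; rewrite !mulgA -(mulgA (r b)) rr_eq1 mulg1 rr_eq1 mul1g. Qed.

Lemma r_triple_rotr a b c x : r a * r b * r c = r x -> r c * r x * r a = r b.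
Proof.
move=> abcx; apply: r_triple_rev.
by rewrite -abcx !mulgA rr_eq1 mul1g -mulgA rr_eq1 mulg1.
Qed.

Lemma perp_coll_triple_ncoll a b c x z z' : a != b -> a != c -> b != c ->
  ~~ coll c x -> r a * r b * r c = r x ->
  z \in perp a b -> z' \in perp a b -> z != z' -> coll z c -> coll z' c -> ~~ coll z x.
Proof.
move=> ab ac bc ncx abcx zP z'P zz' zc z'c; apply/negP => zx.
move: (zP) (z'P); rewrite !inE => /andP [az bz] /andP [az' bz'].
have [cz czcz] : exists cz, line3 c z cz by apply: coll_line3; rewrite coll_sym.
have [xz xzxz] : exists xz, line3 x z xz by apply: coll_line3; rewrite coll_sym.
have abczxz : r a * r b * r cz = r xz.
  by rewrite -(line3_r czcz) -(line3_r xzxz) -abcx !mulgA.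
have ncoll_cz u : coll u z -> u != c -> ~~ coll u cz.
  move=> uz uc; apply/negP => ucz.
  have zczu : line3 z cz u.
    by apply: line3C23; apply: coll3_line3 _ ucz (line3_coll23 czcz); rewrite coll_sym.
  by move: uc; rewrite (line3_uniq zczu (line3C23 (line3C12 czcz))) eqxx.
have nz'cz : ~~ coll z' cz.
  apply/negP => z'cz.
  have cz'cz : line3 c z' cz.
    by apply: coll3_line3 _ z'cz (line3_coll13 czcz); rewrite coll_sym.
  by move: zz'; rewrite (line3_uniq (line3C23 cz'cz) (line3C23 czcz)) eqxx.
have xzcz : coll xz cz.
  apply: (coll_triple_prod ab (ncoll_cz a az ac) (ncoll_cz b bz bc) abczxz _ _ nz'cz);
    by rewrite coll_sym.
have zxzcz := coll3_line3 (line3_coll23 xzxz) xzcz (line3_coll23 czcz).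
move: czcz; rewrite (line3_uniq zxzcz (line3_rot xzxz)) => /line3_coll13.
by apply/negP.
Qed.

Lemma r_prod_karc_extend a b c y : a != b -> ~~ coll a b -> ~~ coll a c ->
  r a * r b = r y -> coll c y ->
  exists d, [/\ d \notin [set a; b; c], ~~ coll a d, ~~ coll b d & ~~ coll c d].
Proof.
move=> ab nab nac aby cy.
have [z1 [z2 [z1P z2P z12]]] := perp_two_points ab nab.
have [w cyw] := coll_line3 cy.
have perp_c z : z \in perp a b -> coll z c -> z = w.
  move=> zP zc; have yz : coll y z by rewrite coll_sym (perp_coll_y nab aby zP).
  have cz : coll c z by rewrite coll_sym.
  exact: line3_uniq (coll3_line3 cy yz cz) cyw.
have [u uP nuc] : exists2 u, u \in perp a b & ~~ coll u c.
  case z1c : (coll z1 c); last by exists z1; rewrite ?z1c.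
  case z2c : (coll z2 c); last by exists z2; rewrite ?z2c.
  by move: z12; rewrite (perp_c _ z1P z1c) (perp_c _ z2P z2c) eqxx.
move: (uP); rewrite inE => /andP [au bu].
have [d uyd] := coll_line3 (perp_coll_y nab aby uP).
have ncoll_d v : coll v u -> v != y -> ~~ coll v d.
  move=> vu vy; apply: contra vy => vd; apply/eqP.
  have uvd : line3 u v d by apply: coll3_line3 _ vd (line3_coll13 uyd); rewrite coll_sym.
  exact: line3_uniq (line3C23 uvd) (line3C23 uyd).
have uc : u != c by apply: contraNneq nac => <-.
exists d; split.
- rewrite !inE; apply/negP => /orP [/orP [] | ] /eqP dE.
  + by move: (r_prod_ncoll aby nab); rewrite coll_sym -dE (line3_coll23 uyd).
  + by move: (r_prod_ncollr aby nab); rewrite coll_sym -dE (line3_coll23 uyd).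
  + by move: nuc; rewrite -dE (line3_coll13 uyd).
- exact: ncoll_d au (r_prod_neq aby).
- exact: ncoll_d bu (r_prod_neqr aby).
- apply/negP => cd; move: uc; rewrite eq_sym => /negP; apply; apply/eqP.
  have ycd : line3 y c d by apply: coll3_line3 _ cd (line3_coll23 uyd); rewrite coll_sym.
  exact: line3_uniq (line3C23 ycd) (line3C23 (line3C12 uyd)).
Qed.

Section TripleProduct.
Variables a b c x : P.
Hypotheses (karc : is_karc L 3 [set a; b; c]) (abcx : r a * r b * r c = r x).

Lemma triple_neq_end : x != c.
Proof.
have [ab _ _ _] := karc3P karc; apply: contra ab => /eqP xc; apply/eqP/r_inj.
by apply: (mulIg (r b)); rewrite rr_eq1; apply: (mulIg (r c)); rewrite abcx xc mul1g.
Qed.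

Lemma triple_perp_coll z : ~~ coll x c -> z \in perp a b -> coll z c.
Proof.
have [ab _ _ [_ nbc nac]] := karc3P karc.
move=> nxc; rewrite inE !(coll_sym _ z) => /andP [za zb]; apply/negPn/negP => nzc.
by move: nxc; rewrite (coll_triple_prod ab nac nbc abcx za zb nzc).
Qed.

Lemma triple_ncoll_perp z z' : ~~ coll c x -> z \in perp a b -> z' \in perp a b ->
  z != z' -> ~~ coll z x.
Proof.
have [ab bc ac _] := karc3P karc.
move=> ncx zP z'P zz'; have nxc : ~~ coll x c by rewrite coll_sym.
exact: perp_coll_triple_ncoll ab ac bc ncx abcx zP z'P zz'
  (triple_perp_coll nxc zP) (triple_perp_coll nxc z'P).
Qed.

Lemma triple_coll_mid : ~~ coll x a -> ~~ coll x c -> coll x b.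
Proof.
have [ab _ _ [nab _ _]] := karc3P karc.
move=> nxa nxc; apply/negPn/negP => nxb.
have [z [z' [zP z'P zz']]] := perp_two_points ab nab.
have ncx : ~~ coll c x by rewrite coll_sym.
move/negP: (triple_ncoll_perp ncx zP z'P zz'); apply; apply/negPn/negP => nzx.
move: (zP); rewrite inE !(coll_sym _ z) => /andP [za zb].
have bax := r_triple_rotl abcx.
move: nxc; rewrite coll_sym (coll_triple_prod _ _ _ bax zb za nzx) //.
- by rewrite eq_sym.
- by rewrite coll_sym.
- by rewrite coll_sym.
Qed.

Lemma triple_ncoll_mid : ~~ coll x a -> ~~ coll x c -> ~~ coll x b.
Proof.
have [ab _ ac [nab _ nac]] := karc3P karc.
move=> nxa nxc; apply/negP => xb.
have perp_ab_ac : perp a b = perp a c.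
  apply/eqP; rewrite eqEcard card_perp // card_perp // leqnn andbT.
  apply/subsetP => u uP; move: (uP); rewrite !inE => /andP [-> _].
  by rewrite coll_sym (triple_perp_coll nxc uP).
have cx : c != x by rewrite eq_sym triple_neq_end.
have ncx : ~~ coll c x by rewrite coll_sym.
have b_perp v : v \in perp c x -> coll b v.
  move=> vP; have: v \in perp a b.
    rewrite perp_ab_ac inE; move: vP; rewrite inE => /andP [cv xv].
    apply/andP; split=> //; apply/negPn/negP => nav.
    have nca : ~~ coll c a by rewrite coll_sym.
    rewrite !(coll_sym _ v) in cv xv nav.
    have := coll_triple_prod cx nca nxa (r_triple_rotr abcx) cv xv nav.
    by rewrite coll_sym (negbTE nab).
  by rewrite inE => /andP [].
have [u [u' [uP u'P uu']]] := perp_two_points cx ncx.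
move: (uP) (u'P); rewrite !inE => /andP [_ xu] /andP [_ xu'].
have bx : coll b x by rewrite coll_sym.
have bxu := coll3_line3 bx xu (b_perp u uP).
have bxu' := coll3_line3 bx xu' (b_perp u' u'P).
by move: uu'; rewrite (line3_uniq bxu bxu') eqxx.
Qed.

Lemma triple_coll_end : coll x a || coll x c.
Proof.
apply/negPn/negP; rewrite negb_or => /andP [nxa nxc].
by move: (triple_ncoll_mid nxa nxc); rewrite (triple_coll_mid nxa nxc).
Qed.

Lemma triple_coll_consequences : coll x c ->
  [/\ t = 2, has_order R 16 & ~ complete_karc L 3 [set a; b; c]].
Proof.
have [ab _ _ [nab _ nac]] := karc3P karc.
move=> xc; have [y xcy] := coll_line3 xc.
have aby : r a * r b = r y by rewrite -(line3_r xcy) -abcx -mulgA rr_eq1 mulg1.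
have [z1 [z2 [z1P z2P z12]]] := perp_two_points ab nab.
have [d [dS nad nbd ncd]] := r_prod_karc_extend ab nab nac aby (line3_coll23 xcy).
split; first exact: t_eq2 ab nab aby z1P z2P z12.
  exact: has_order16 ab nab aby z1P z2P z12.
exact: karc3_not_complete karc dS nad nbd ncd.
Qed.

End TripleProduct.
End Representation.
End GeneralizedQuadrangle.

Unset Implicit Arguments.
Local Open Scope group_scope.

Theorem lemma3p7 (P : finType) (L : {set {set P}}) (t : nat)
    (R : groupType) (r : P -> R) (a b c : P) :
  is_GQ2 L t ->
  is_representation L r ->
  faithful r ->
  is_karc L 3 [set a; b; c] ->
  (exists x : P, r a * r b * r c = r x) ->
  t = 2%N /\ has_order R 16 /\ ~ complete_karc L 3 [set a; b; c].
Proof.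
move=> gq rep faithful_r karc [x abcx].
have [xa | xc] := orP (triple_coll_end gq rep faithful_r karc abcx).
- have karc' : is_karc L 3 [set c; b; a] by rewrite set3C13.
  have cbax := r_triple_rev rep abcx.
  by have [] := triple_coll_consequences gq rep faithful_r karc' cbax xa; rewrite set3C13.
- by have [] := triple_coll_consequences gq rep faithful_r karc abcx xc.
Qed.
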